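(* Let $L=K_1\cup\cdots\cup K_n$ be a virtual $n$-string link, where $K_i$ is the string starting at $(i,1)$, and write its bowling ball matrix as $M(L)=(a_{ij}s+b_{ij})_{n\times n}$ with $a_{ij}\in\mathbb{Z}$, $b_{ij}\in\{0,1\}$. Let $a_i(L)=\max_{1\le j\le n}|a_{ij}|$, and let $lk_v(L;K_i)$ be the minimum, over all virtual string link diagrams representing $L$, of the number of virtual crossings between $K_i$ and the strings $K_j$, $j\neq i$. Then $lk_v(L;K_i)\ge a_i(L)$.
   Context: A virtual $n$-string link diagram is a collection of $n$ oriented immersed strings in $\mathbb{R}\times[0,1]$, the $i$-th running from $(i,1)$ to $(\pi(i),0)$ for a permutation $\pi$, whose crossings are either real (with over/under information) or virtual; virtual string links are equivalence classes of such diagrams under generalized Reidemeister moves (classical moves, virtual moves and the mixed move). Bowling ball matrix $M(L)$: a ball travels from a top endpoint along the orientation. At a real crossing it always continues along its strand (weight $1$). At a virtual crossing, rotated so both strands point downward, a ball arriving along the strand entering from the upper left jumps to the other strand with weight $s$ and continues with weight $1-s$; a ball arriving along the strand from the upper right jumps with weight $-s$ and continues with weight $1+s$; here $s^2=0$. A path's weight is the product of the weights at the virtual crossings it passes, and $m_{ij}\in\mathbb{Z}[s]/(s^2)$ is the sum of the weights of all paths from $(i,1)$ to $(j,0)$ (only finitely many have nonzero weight). $M(L)$ is an invariant of the virtual string link and each entry has the form $as+b$ with $a\in\mathbb{Z}$, $b\in\{0,1\}$. *)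

From mathcomp Require Import all_boot all_algebra.
Set Implicit Arguments. Unset Strict Implicit. Unset Printing Implicit Defensive.
Import GRing.Theory Num.Theory.

(* Diagrams.  A diagram in R x [0,1] in general position with respect to the *)
(* height function is cut into horizontal slices, read from top (height 1)   *)
(* to bottom (height 0).  Level l (l = 0 .. size D) is a horizontal line     *)
(* meeting the diagram in [width l] points, numbered 0,1,... from left to    *)
(* right; level 0 is the top line, level (size D) the bottom line.  Slice l  *)
(* lies between levels l and l+1 and contains exactly one elementary piece:  *)
(*  - SCross k b : a real crossing between the strand joining top point k to *)
(*                 bottom point k+1 (the "A-line") and the strand joining    *)
(*                 top point k+1 to bottom point k (the "B-line"); b says    *)
(*                 whether the A-line is the over strand;                    *)
(*  - SVirt k    : a virtual crossing between the same two lines;            *)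
(*  - SCup k     : a local minimum joining top points k and k+1 (width -2);  *)
(*  - SCap k     : a local maximum creating bottom points k and k+1 (+2).    *)
(* All other points go straight through.                                     *)

Inductive slice : Type :=
| SCross of nat & bool
| SVirt of nat
| SCup of nat
| SCap of nat.

Definition diagram := seq slice.

Definition width_after (w : nat) (s : slice) : nat :=
  match s with SCup _ => w - 2 | SCap _ => w + 2 | _ => w end.

Definition slice_ok (w : nat) (s : slice) : bool :=
  match s with
  | SCross k _ | SVirt k | SCup k => k.+1 < w
  | SCap k => k <= w
  end.

Fixpoint shape_ok (w n : nat) (D : diagram) : bool :=
  match D with
  | [::] => w == n
  | s :: D' => slice_ok w s && shape_ok (width_after w s) n D'
  end.

Fixpoint widths (w : nat) (D : diagram) : seq nat :=
  match D with
  | [::] => [:: w]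
  | s :: D' => w :: widths (width_after w s) D'
  end.

Definition width (n : nat) (D : diagram) (l : nat) : nat := nth 0 (widths n D) l.

Definition sl (D : diagram) (l : nat) : slice := nth (SVirt 0) D l.

Definition swap (k p : nat) : nat :=
  if p == k then k.+1 else if p == k.+1 then k else p.

(* A state (l, p, dn): the traveller is at point p of level l and is about  *)
(* to move downward (dn = true, through slice l) or upward (dn = false,     *)
(* through slice l-1).                                                       *)
Definition state := (nat * nat * bool)%type.

(* A passage through a virtual crossing: (slice index, on the A-line?,       *)
(* traversed downward?).                                                     *)
Definition passage := (nat * bool * bool)%type.

Definition step (D : diagram) (st : state) : option (state * option passage) :=
  let: (l, p, dn) := st in
  if dn then
    match sl D l with
    | SCross k _ => Some ((l.+1, swap k p, true), None)
    | SVirt k => Some ((l.+1, swap k p, true),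
                       if (p == k) || (p == k.+1) then Some (l, p == k, true) else None)
    | SCup k => if p == k then Some ((l, k.+1, false), None)
                else if p == k.+1 then Some ((l, k, false), None)
                else if p < k then Some ((l.+1, p, true), None)
                else Some ((l.+1, p - 2, true), None)
    | SCap k => if p < k then Some ((l.+1, p, true), None)
                else Some ((l.+1, p + 2, true), None)
    end
  else
    match l with
    | 0 => None (* would leave through the top line: not allowed *)
    | l'.+1 =>
      match sl D l' with
      | SCross k _ => Some ((l', swap k p, false), None)
      | SVirt k => Some ((l', swap k p, false),
                         if (p == k) || (p == k.+1) then Some (l', p == k.+1, false) else None)
      | SCup k => if p < k then Some ((l', p, false), None)
                  else Some ((l', p + 2, false), None)
      | SCap k => if p == k then Some ((l, k.+1, true), None)
                  else if p == k.+1 then Some ((l, k, true), None)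
                  else if p < k then Some ((l', p, false), None)
                  else Some ((l', p - 2, false), None)
      end
    end.

Definition ocons (T : Type) (o : option T) (s : seq T) : seq T :=
  match o with Some x => x :: s | None => s end.

Fixpoint trace (D : diagram) (fuel : nat) (st : state)
  : option (seq passage * seq state * nat) :=
  match fuel with
  | 0 => None
  | f.+1 =>
    if st.2 && (st.1.1 == size D) then Some ([::], [:: st], st.1.2) else
    match step D st with
    | None => None
    | Some (st', op) =>
      match trace D f st' with
      | None => None
      | Some (ps, vs, e) => Some (ocons op ps, st :: vs, e)
      end
    end
  end.

(* The dynamics is deterministic, reversible and the start state has no     *)
(* predecessor, so a trajectory never repeats a state; this fuel (number of *)
(* states + 1) is therefore always sufficient.                              *)
Definition fuel (n : nat) (D : diagram) : nat := (2 * sumn (widths n D)).+2.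

Definition string_trace (n : nat) (D : diagram) (i : nat) :=
  trace D (fuel n D) (0, i, true).

Definition passages (n : nat) (D : diagram) (i : nat) : seq passage :=
  match string_trace n D i with Some (ps, _, _) => ps | None => [::] end.
Definition visited (n : nat) (D : diagram) (i : nat) : seq state :=
  match string_trace n D i with Some (_, vs, _) => vs | None => [::] end.
Definition endpos (n : nat) (D : diagram) (i : nat) : nat :=
  match string_trace n D i with Some (_, _, e) => e | None => 0 end.

(* A virtual n-string link diagram: consistent shape with n top and n bottom *)
(* points, every string started at a top point ends at a bottom point, and   *)
(* there are no closed components (every point of every level lies on one   *)
(* of the n strings).                                                        *)
Definition vsl_diagram (n : nat) (D : diagram) : bool :=
  shape_ok n n D
  && all (fun i => string_trace n D i != None) (iota 0 n)
  && all (fun l => all (fun p => has (fun i => ((l, p, true) \in visited n D i)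
                                            || ((l, p, false) \in visited n D i))
                                     (iota 0 n))
                       (iota 0 (width n D l)))
         (iota 0 (size D).+1).

(* Virtual crossings along the strings.  Passage t of string k (the t-th     *)
(* virtual crossing met along K_k) has a partner: the other passage through  *)
(* the same virtual crossing.                                                *)

Definition dpass : passage := (0, false, false).

Definition partner (n : nat) (D : diagram) (k t : nat) : option (nat * nat) :=
  let l := (nth dpass (passages n D k) t).1.1 in
  ohead [seq kt <- [seq (k', t') | k' <- iota 0 n, t' <- iota 0 (size (passages n D k'))]
         | (kt != (k, t)) && ((nth dpass (passages n D kt.1) kt.2).1.1 == l)].

(* Is passage t of string k the strand entering from the upper left, once the *)
(* crossing is rotated so that both strands point downward?  Direction        *)
(* vectors: A-line down (1,-1), up (-1,1); B-line down (-1,-1), up (1,1).     *)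
(* The upper-left strand L and upper-right strand R satisfy det(L,R) < 0,     *)
(* which gives: the A-line strand is L iff both strands have the same         *)
(* vertical direction.                                                        *)
Definition upper_left (n : nat) (D : diagram) (k t : nat) : bool :=
  let p := nth dpass (passages n D k) t in
  match partner n D k t with
  | Some (k', t') => p.1.2 == (p.2 == (nth dpass (passages n D k') t').2)
  | None => p.1.2
  end.

Definition vcross_other (n : nat) (D : diagram) (i : nat) : nat :=
  count (fun t => match partner n D i t with Some (k', _) => k' != i | None => false end)
        (iota 0 (size (passages n D i))).

(* Z[s]/(s^2): pairs (b, a) standing for a s + b.                            *)
Definition dual := (int * int)%type.
Definition dadd (x y : dual) : dual := (x.1 + y.1, x.2 + y.2)%R.
Definition dmul (x y : dual) : dual := (x.1 * y.1, x.1 * y.2 + x.2 * y.1)%R.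
Definition dzero : dual := (0%R, 0%R).
Definition done_ : dual := (1%R, 0%R).

(* weights: upper-left strand: jump s, continue 1 - s;
            upper-right strand: jump -s, continue 1 + s *)
Definition jump_w (b : bool) : dual := if b then (0%R, 1%R) else (0%R, (-1)%R).
Definition cont_w (b : bool) : dual := if b then (1%R, (-1)%R) else (1%R, 1%R).

(* A bowling-ball path is determined by its sequence of decisions at the     *)
(* virtual crossings it passes (true = jump).  run k t ds: ball on string k   *)
(* about to pass its t-th virtual passage; returns the bottom endpoint and    *)
(* the weight, if ds is exactly the decision sequence of a complete path.    *)
Fixpoint run (n : nat) (D : diagram) (k t : nat) (ds : seq bool) : option (nat * dual) :=
  match ds with
  | [::] => if t == size (passages n D k) then Some (endpos n D k, done_) else None
  | d :: ds' =>
    if t < size (passages n D k) then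
      if d then
        match partner n D k t with
        | Some (k', t') =>
            match run n D k' t'.+1 ds' with
            | Some (j, w) => Some (j, dmul (jump_w (upper_left n D k t)) w)
            | None => None
            end
        | None => None
        end
      else
        match run n D k t.+1 ds' with
        | Some (j, w) => Some (j, dmul (cont_w (upper_left n D k t)) w)
        | None => None
        end
    else None
  end.

Fixpoint bseqs (m : nat) : seq (seq bool) :=
  match m with
  | 0 => [:: [::]]
  | m'.+1 => [seq b :: s | b <- [:: true; false], s <- bseqs m']
  end.

(* Every path of nonzero weight makes at most one jump, hence passes at most *)
(* 2 * (total number of virtual passages) crossings; paths with >= 2 jumps  *)
(* have weight 0.  So summing over all paths of at most this length is the  *)
(* (finite) sum over all paths of the definition.                           *)
Definition path_bound (n : nat) (D : diagram) : nat :=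
  2 * sumn [seq size (passages n D k) | k <- iota 0 n].

(* entry m_ij of the bowling ball matrix M(D) (strings and bottom points   *)
(* numbered from 0) *)
Definition bb_entry (n : nat) (D : diagram) (i j : nat) : dual :=
  foldr dadd dzero
    [seq match run n D i 0 ds with
         | Some (j', w) => if j' == j then w else dzero
         | None => dzero
         end
    | m <- iota 0 (path_bound n D).+1, ds <- bseqs m].

Definition bb_matrix (n : nat) (D : diagram) : 'M[dual]_n :=
  \matrix_(i < n, j < n) bb_entry n D i j.

Definition a_row (n : nat) (D : diagram) (i : 'I_n) : nat :=
  \max_(j < n) `|(bb_matrix n D i j).2|%N.

From mathcomp Require Import all_boot all_order all_algebra.
From mathcomp Require Import zify.
Set Implicit Arguments. Unset Strict Implicit. Unset Printing Implicit Defensive.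
Import Order.TTheory GRing.Theory Num.Theory.

(* Since s^2 = 0, only paths with at most one jump have nonzero weight, and  *)
(* expanding the continuation weights 1 -+ s shows that a_ij is a sum over   *)
(* the virtual passages of K_i: jumping there contributes +-s if the string  *)
(* of the partner passage ends at j, staying contributes -+s if K_i ends at  *)
(* j.  When the partner passage lies on K_i itself the two cancel, so only   *)
(* virtual crossings of K_i with other strings contribute, each at most 1 in *)
(* absolute value.  The geometric input is that, a string link diagram       *)
(* having no closed components, every virtual passage has a partner.         *)

Definition bottom_state (D : diagram) (st : state) : bool :=
  st.2 && (st.1.1 == size D).

Section Traces.

Variable D : diagram.

Lemma trace_passage_step f st ps vs e P :
  trace D f st = Some (ps, vs, e) -> P \in ps ->
  exists x x', [/\ x \in vs, ~~ bottom_state D x & step D x = Some (x', Some P)].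
Proof.
elim: f st ps vs e => [|f IH] st ps vs e //=.
case: ifP => [_ [<-] //|not_bot].
case Hs: (step D st) => [[st' op]|] //.
case Ht: (trace D f st') => [[[ps' vs'] e']|] // [<- <- _].
have IH' : P \in ps' ->
    exists x x', [/\ x \in st :: vs', ~~ bottom_state D x & step D x = Some (x', Some P)].
  move=> /(IH _ _ _ _ Ht) [x [x' [xvs ? ?]]].
  by exists x, x'; rewrite inE xvs orbT.
case: op Hs => [P0|] Hs /=; last exact: IH'.
rewrite inE => /predU1P [->|]; last exact: IH'.
by exists st, st'; rewrite mem_head /bottom_state not_bot.
Qed.

Lemma trace_visited_succ f st ps vs e x :
  trace D f st = Some (ps, vs, e) -> x \in vs -> ~~ bottom_state D x ->
  exists x' op, step D x = Some (x', op) /\ forall P, op = Some P -> P \in ps.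
Proof.
elim: f st ps vs e => [|f IH] st ps vs e //=.
case: ifP => [bot [_ <- _]|not_bot]; first by rewrite inE => /eqP ->; rewrite /bottom_state bot.
case Hs: (step D st) => [[st' op]|] //.
case Ht: (trace D f st') => [[[ps' vs'] e']|] // [<- <- _].
have sub_ps P : P \in ps' -> P \in ocons op ps'.
  by case: op {Hs} => [?|] //= HP; rewrite inE HP orbT.
rewrite inE => /predU1P [-> _|xvs x_not_bot].
  by exists st', op; split=> // P ->; rewrite mem_head.
have [x' [op' [Hx' Hop']]] := IH _ _ _ _ Ht xvs x_not_bot.
by exists x', op'; split=> // P /Hop' /sub_ps.
Qed.

Lemma trace_visited_pred f st ps vs e x :
  trace D f st = Some (ps, vs, e) -> x \in vs -> x != st ->
  exists y op, [/\ y \in vs, step D y = Some (x, op) & forall P, op = Some P -> P \in ps].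
Proof.
elim: f st ps vs e => [|f IH] st ps vs e //=.
case: ifP => [_ [_ <- _]|not_bot]; first by rewrite inE => /eqP ->; rewrite eqxx.
case Hs: (step D st) => [[st' op]|] //.
case Ht: (trace D f st') => [[[ps' vs'] e']|] // [<- <- _].
rewrite inE => /predU1P [-> |xvs]; first by rewrite eqxx.
move=> x_neq_st.
have sub_ps P : P \in ps' -> P \in ocons op ps'.
  by case: op {Hs} => [?|] //= HP; rewrite inE HP orbT.
have [->|x_neq_st'] := eqVneq x st'.
  by exists st, op; split=> //; [rewrite mem_head | move=> P ->; rewrite mem_head].
have [y [op' [yvs Hy Hop']]] := IH _ _ _ _ Ht xvs x_neq_st'.
by exists y, op'; split=> //; [rewrite inE yvs orbT | move=> P /Hop' /sub_ps].
Qed.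

Lemma step_level_le st st' op : st.1.1 <= size D -> ~~ bottom_state D st ->
  step D st = Some (st', op) -> st'.1.1 <= size D.
Proof.
case: st => [[l p] [|]]; rewrite /bottom_state /= => le_l not_bot.
  by case: (sl D l) => [k b|k|k|k] /=; repeat case: ifP => _; move=> [<- _] /=; lia.
case: l le_l not_bot => [|l] //= le_l _.
by case: (sl D l) => [k b|k|k|k] /=; repeat case: ifP => _; move=> [<- _] /=; lia.
Qed.

Lemma trace_level_le f st ps vs e : st.1.1 <= size D ->
  trace D f st = Some (ps, vs, e) -> forall x, x \in vs -> x.1.1 <= size D.
Proof.
elim: f st ps vs e => [|f IH] st ps vs e //= le_st.
case: ifP => [_ [_ <- _]|not_bot]; first by move=> x; rewrite inE => /eqP ->.
case Hs: (step D st) => [[st' op]|] //.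
case Ht: (trace D f st') => [[[ps' vs'] e']|] // [_ <- _] x.
rewrite inE => /predU1P [-> //|]; apply: (IH _ _ _ _ _ Ht).
by apply: (step_level_le le_st _ Hs); rewrite /bottom_state not_bot.
Qed.

End Traces.

Lemma swap_eq_l k p : (swap k p == k) = (p == k.+1).
Proof.
rewrite /swap; case: (eqVneq p k) => [->|/negPf pk]; first by rewrite gtn_eqF // ltn_eqF.
by case: (eqVneq p k.+1) => _; rewrite ?eqxx.
Qed.

Lemma swap_eq_r k p : (swap k p == k.+1) = (p == k).
Proof.
rewrite /swap; case: (eqVneq p k) => [_|_]; first by rewrite eqxx.
by case: (eqVneq p k.+1) => [_|/negPf //]; rewrite ltn_eqF.
Qed.

Lemma shape_ok_slice w n D l : shape_ok w n D -> l < size D ->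
  slice_ok (nth 0 (widths w D) l) (sl D l).
Proof.
elim: D w l => [|s D IH] w [|l] //= /andP [ok_s shape_D] lt_l //; exact: IH.
Qed.

Lemma step_passage_inv D x x' P : step D x = Some (x', Some P) ->
  exists k, sl D P.1.1 = SVirt k /\ (x = (P.1.1, x.1.2, true) \/ x.1.1 = P.1.1.+1).
Proof.
case: x => [[l p] [|]] /=; last case: l => [|l] //=.
all: case E: (sl D _) => [k b|k|k|k] //=; repeat case: ifP => //.
all: by move=> _ [_ <-]; exists k; split; [|by [left|right]].
Qed.

Lemma step_up_virt D y l k q op : sl D l = SVirt k -> (q == k) || (q == k.+1) ->
  step D y = Some ((l, q, false), op) -> op = Some (l, q == k, false).
Proof.
move=> Hl q_end; case: y => [[l0 p0] [|]] /=; last case: l0 => [|l0] //=.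
all: case E: (sl D _) => [k0 b|k0|k0|k0] /=; repeat case: ifP => ?; try by case.
all: case=> El; rewrite El Hl in E => //; case: E => Ek Eq Eop; subst.
all: by move: q_end; rewrite swap_eq_l swap_eq_r orbC => ?; congruence.
Qed.

Lemma trace_passage_virtual D f st ps vs e P : st.1.1 <= size D ->
  trace D f st = Some (ps, vs, e) -> P \in ps ->
  P.1.1 < size D /\ exists k, sl D P.1.1 = SVirt k.
Proof.
move=> le_st Ht /(trace_passage_step Ht) [x [x' [xvs not_bot Hx]]].
have le_x := trace_level_le le_st Ht xvs.
have [k [Hk Ex]] := step_passage_inv Hx.
split; last by exists k.
case: Ex not_bot le_x => [-> | ->]; rewrite /bottom_state /=; lia.
Qed.

Lemma trace_visit_virtual D f st ps vs e l k q dn :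
  trace D f st = Some (ps, vs, e) -> st.2 -> l < size D ->
  sl D l = SVirt k -> (q == k) || (q == k.+1) ->
  (l, q, dn) \in vs -> (l, q == k, dn) \in ps.
Proof.
move=> Ht st_down lt_l Hk q_end; case: dn => lqvs.
  have not_bot : ~~ bottom_state D (l, q, true) by rewrite /bottom_state /=; lia.
  have [x' [op [Hx Hop]]] := trace_visited_succ Ht lqvs not_bot.
  by apply: Hop; move: Hx; rewrite /= Hk q_end => -[_ <-].
have neq_st : (l, q, false) != st by apply: contraTneq st_down => <-.
have [y [op [_ Hy Hop]]] := trace_visited_pred Ht lqvs neq_st.
by apply: Hop; apply: step_up_virt Hy.
Qed.

Lemma partner_bounds n D k t k' t' : partner n D k t = Some (k', t') ->
  k' < n /\ t' < size (passages n D k').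
Proof.
rewrite /partner; case E: filter => [|kt s] //= [Ekt].
have : (k', t') \in kt :: s by rewrite Ekt mem_head.
rewrite -E mem_filter => /andP [_ /allpairsPdep [a [b [a_in b_in [-> ->]]]]].
by move: a_in b_in; rewrite !mem_iota.
Qed.

Lemma partner_other n D k t k' t' : k' < n -> t' < size (passages n D k') ->
  (k', t') != (k, t) ->
  (nth dpass (passages n D k') t').1.1 = (nth dpass (passages n D k) t).1.1 ->
  partner n D k t != None.
Proof.
move=> lt_k' lt_t' neq_kt same_level; rewrite /partner.
have : (k', t') \in [seq kt <- [seq (k'', t'') | k'' <- iota 0 n,
                                   t'' <- iota 0 (size (passages n D k''))]
                   | (kt != (k, t))
                     && ((nth dpass (passages n D kt.1) kt.2).1.1
                         == (nth dpass (passages n D k) t).1.1)].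
  rewrite mem_filter /= neq_kt same_level eqxx /=.
  by apply/allpairsPdep; exists k', t'; rewrite !mem_iota.
by case: filter.
Qed.

Section Link.

Variables (n : nat) (D : diagram).
Hypothesis vslD : vsl_diagram n D.

Lemma vsl_shape : shape_ok n n D.
Proof. by case/andP: vslD => /andP []. Qed.

Lemma vsl_trace i : i < n -> exists ps vs e, string_trace n D i = Some (ps, vs, e).
Proof.
case/andP: vslD => /andP [_ /allP traced] _ lt_i.
move: (traced i); rewrite mem_iota => /(_ lt_i).
by case: string_trace => // [[[ps vs] e]] _; exists ps, vs, e.
Qed.

Lemma vsl_covered l p : l <= size D -> p < width n D l ->
  exists i, [/\ i < n & exists dn, (l, p, dn) \in visited n D i].
Proof.
case/andP: vslD => _ /allP covered le_l lt_p.
move: (covered l); rewrite mem_iota => /(_ ltac:(lia)) /allP /(_ p).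
rewrite mem_iota => /(_ lt_p) /hasP [i]; rewrite mem_iota => lt_i.
by case/orP=> ?; exists i; split=> //; [exists true | exists false].
Qed.

Lemma vsl_partner i t : i < n -> t < size (passages n D i) -> partner n D i t != None.
Proof.
move=> lt_i lt_t.
have [ps [vs [e Hi]]] := vsl_trace lt_i.
have ps_i : passages n D i = ps by rewrite /passages Hi.
set P := nth dpass ps t.
have P_in : P \in ps by rewrite mem_nth // -ps_i.
have [lt_l [k Hk]] := trace_passage_virtual (isT : (0, i, true).1.1 <= size D) Hi P_in.
have lt_k : k.+1 < width n D P.1.1 by have := shape_ok_slice vsl_shape lt_l; rewrite Hk.
(* [q] is where the other strand of the crossing meets the level above it. *)
set q := if P.1.2 then k.+1 else k.
have q_end : (q == k) || (q == k.+1) by rewrite /q; case: P.1.2; rewrite eqxx ?orbT.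
have q_k : (q == k) = ~~ P.1.2 by rewrite /q; case: P.1.2; rewrite ?eqxx ?gtn_eqF.
have lt_q : q < width n D P.1.1 by rewrite /q; case: P.1.2; lia.
have [i' [lt_i' [dn lq_vis]]] := vsl_covered (ltnW lt_l) lt_q.
have [ps' [vs' [e' Hi']]] := vsl_trace lt_i'.
have ps_i' : passages n D i' = ps' by rewrite /passages Hi'.
rewrite /visited Hi' in lq_vis.
have P'_in := trace_visit_virtual Hi' isT lt_l Hk q_end lq_vis.
apply: (partner_other lt_i' (t' := index (P.1.1, q == k, dn) ps')).
- by rewrite ps_i' index_mem.
- apply/eqP => -[Ei Et]; subst i'.
  have Eps : ps' = ps by move: Hi'; rewrite Hi => -[].
  rewrite Eps in P'_in Et.
  move: (nth_index dpass P'_in); rewrite Et -/P => /(congr1 (fun x => x.1.2)) /=.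
  by rewrite q_k; case: P.1.2.
- by rewrite ps_i' nth_index // ps_i.
Qed.

End Link.

Local Open Scope ring_scope.

Definition npass (n : nat) (D : diagram) (k : nat) : nat := size (passages n D k).

Definition path_weight (n : nat) (D : diagram) (j k t : nat) (ds : seq bool) : dual :=
  if run n D k t ds is Some (j', w) then (if j' == j then w else dzero) else dzero.

Definition path_sum (f : seq bool -> int) (m : nat) : int :=
  \sum_(0 <= m' < m.+1) \sum_(ds <- bseqs m') f ds.

Lemma eq_path_sum f g m : f =1 g -> path_sum f m = path_sum g m.
Proof. by move=> fg; apply: eq_bigr => m' _; apply: eq_bigr. Qed.

Lemma path_sum0 m : path_sum (fun => 0) m = 0.
Proof. by rewrite /path_sum big1 // => m' _; rewrite big1. Qed.

Lemma path_sumD f g m :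
  path_sum (fun ds => f ds + g ds) m = path_sum f m + path_sum g m.
Proof. by rewrite /path_sum -big_split; apply: eq_bigr => m' _; rewrite big_split. Qed.

Lemma path_sumMl a f m : path_sum (fun ds => a * f ds) m = a * path_sum f m.
Proof. by rewrite /path_sum mulr_sumr; apply: eq_bigr => m' _; rewrite mulr_sumr. Qed.

Lemma path_sumS f m : path_sum f m.+1 =
  f [::] + path_sum (fun ds => f (true :: ds)) m + path_sum (fun ds => f (false :: ds)) m.
Proof.
rewrite /path_sum big_nat_recl //= big_seq1 -addrA -big_split /=; congr (_ + _).
by apply: eq_bigr => m' _; rewrite cats0 big_cat !big_map.
Qed.

Lemma dmul0 a : dmul a dzero = dzero.
Proof. by rewrite /dmul /= !mulr0 addr0. Qed.

Lemma path_weight_nil n D j k t : path_weight n D j k t [::] =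
  if (t == npass n D k) && (endpos n D k == j) then done_ else dzero.
Proof. by rewrite /path_weight /npass /=; case: (t == _) => //=; case: (_ == j). Qed.

Lemma path_weight_cons n D j k t d ds : path_weight n D j k t (d :: ds) =
  if (t < npass n D k)%N then
    if d then
      if partner n D k t is Some (k', t') then
        dmul (jump_w (upper_left n D k t)) (path_weight n D j k' t'.+1 ds)
      else dzero
    else dmul (cont_w (upper_left n D k t)) (path_weight n D j k t.+1 ds)
  else dzero.
Proof.
rewrite /path_weight /npass /=; case: ifP => // _; case: d.
  case: (partner n D k t) => [[k' t']|] //.
  by case: (run n D k' t'.+1 ds) => [[j' w]|]; [case: ifP|]; rewrite ?dmul0.
by case: (run n D k t.+1 ds) => [[j' w]|]; [case: ifP|]; rewrite ?dmul0.
Qed.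

(* The paths from the [t]-th virtual passage of [K_k] to the bottom point [j] *)
(* with at most [m] decisions contribute [asum s + bsum] to [m_kj].            *)
Definition bsum (n : nat) (D : diagram) (j k t m : nat) : int :=
  path_sum (fun ds => (path_weight n D j k t ds).1) m.
Definition asum (n : nat) (D : diagram) (j k t m : nat) : int :=
  path_sum (fun ds => (path_weight n D j k t ds).2) m.

Definition ends_at (n : nat) (D : diagram) (k j : nat) : int :=
  if endpos n D k == j then 1 else 0.

Lemma bsumS n D j k t m : bsum n D j k t m.+1 =
  (if t == npass n D k then ends_at n D k j else 0)
  + (if (t < npass n D k)%N then bsum n D j k t.+1 m else 0).
Proof.
rewrite /bsum path_sumS path_weight_nil.
rewrite (@eq_path_sum _ (fun => 0)) ?path_sum0 ?addr0; last first.
  move=> ds; rewrite path_weight_cons; case: ifP => // _.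
  by case: partner => [[k' t']|] //=; case: upper_left; rewrite mul0r.
congr (_ + _); first by rewrite /ends_at; case: (t == _); case: (_ == j).
case: ifP => lt_t; last first.
  by rewrite -(path_sum0 m); apply: eq_path_sum => ds; rewrite path_weight_cons lt_t.
by apply: eq_path_sum => ds; rewrite path_weight_cons lt_t /=; case: upper_left; rewrite mul1r.
Qed.

Lemma asumS n D j k t m : asum n D j k t m.+1 =
  if (t < npass n D k)%N then
    (if partner n D k t is Some (k', t') then
       (jump_w (upper_left n D k t)).2 * bsum n D j k' t'.+1 m
     else 0)
    + asum n D j k t.+1 m + (cont_w (upper_left n D k t)).2 * bsum n D j k t.+1 m
  else 0.
Proof.
rewrite /asum path_sumS path_weight_nil.
have -> : (if (t == npass n D k) && (endpos n D k == j) then done_ else dzero).2 = 0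
  by case: ifP.
rewrite add0r; case: ifP => lt_t; last first.
  rewrite -(path_sum0 m) -path_sumD; apply: eq_path_sum => ds.
  by rewrite !path_weight_cons lt_t addr0.
rewrite -addrA; congr (_ + _).
  case: (partner n D k t) (path_weight_cons n D j k t true) => [[k' t']|] Ew.
    by rewrite /bsum -path_sumMl; apply: eq_path_sum => ds; rewrite Ew lt_t /=;
      case: upper_left => /=; rewrite mul0r add0r.
  by rewrite -(path_sum0 m); apply: eq_path_sum => ds; rewrite Ew lt_t.
rewrite /bsum -path_sumMl -path_sumD; apply: eq_path_sum => ds.
by rewrite path_weight_cons lt_t /=; case: upper_left => /=; rewrite mul1r.
Qed.

Lemma bsum_ends n D j k m t : (t <= npass n D k)%N -> (npass n D k - t <= m)%N ->
  bsum n D j k t m = ends_at n D k j.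
Proof.
elim: m t => [|m IH] t le_t le_m.
  have -> : t = npass n D k by lia.
  by rewrite /bsum /path_sum big_nat1 big_seq1 path_weight_nil eqxx /ends_at; case: (_ == j).
rewrite bsumS; case: (ltnP t (npass n D k)) => lt_t.
  by rewrite ltn_eqF // add0r IH //; lia.
have -> : t = npass n D k by lia.
by rewrite eqxx addr0.
Qed.

Definition passage_contrib (n : nat) (D : diagram) (j i u : nat) : int :=
  (if partner n D i u is Some (k', _) then
     (jump_w (upper_left n D i u)).2 * ends_at n D k' j
   else 0)
  + (cont_w (upper_left n D i u)).2 * ends_at n D i j.

(* [C] bounds the number of decisions of every path with at most one jump. *)
Lemma asum_passages n D j i C : (i < n)%N ->
  (forall k, (k < n)%N -> (npass n D k + npass n D i <= C)%N) ->
  forall m t, (m + t = C)%N -> (t <= npass n D i)%N ->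
  asum n D j i t m = \sum_(t <= u < npass n D i) passage_contrib n D j i u.
Proof.
move=> lt_i le_C; have le_Ci := le_C i lt_i.
elim=> [|m IH] t Emt le_t.
  have -> : t = npass n D i by lia.
  by rewrite /asum /path_sum big_nat1 big_seq1 path_weight_nil big_geq //; case: ifP.
rewrite asumS; case: (ltnP t (npass n D i)) => lt_t; last by rewrite big_geq.
have -> := IH t.+1 ltac:(lia) lt_t.
have -> := @bsum_ends n D j i m t.+1 lt_t ltac:(lia).
rewrite [RHS]big_ltn // addrAC; congr (_ + _).
rewrite /passage_contrib; case Ep: (partner n D i t) => [[k' t']|] //.
have [lt_k' lt_t'] := partner_bounds Ep; have le_Ck' := le_C k' lt_k'.
rewrite (@bsum_ends n D j k' m t'.+1 lt_t') //.
by move: le_Ck' lt_t' lt_t Emt; rewrite /npass; lia.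
Qed.

Lemma foldr_dadd2 (L : seq dual) : (foldr dadd dzero L).2 = \sum_(x <- L) x.2.
Proof. by elim: L => [|x L IH]; rewrite ?big_nil ?big_cons //= IH. Qed.

Lemma bb_entry_a n D i j : (bb_entry n D i j).2 = asum n D j i 0 (path_bound n D).
Proof. by rewrite /bb_entry foldr_dadd2 big_allpairs_dep. Qed.

Definition crosses_other (n : nat) (D : diagram) (i u : nat) : bool :=
  if partner n D i u is Some (k', _) then k' != i else false.

(* When the partner passage lies on [K_i] itself, jumping and continuing end *)
(* at the same bottom point and the s-parts of their weights cancel.        *)
Lemma passage_contrib_bound n D j i u : partner n D i u != None ->
  `|passage_contrib n D j i u| <= (crosses_other n D i u : nat)%:R.
Proof.
rewrite /passage_contrib /crosses_other /ends_at.
case: (partner n D i u) => [[k' t'] _|] //=.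
by case: (eqVneq k' i) => [->|_]; case: upper_left; do 2?case: (endpos _ _ _ == j).
Qed.

Lemma norm_sum_le_count (R : numDomainType) (T : eqType) (s : seq T) (p : pred T)
    (F : T -> R) :
  (forall x, x \in s -> `|F x| <= (p x : nat)%:R) -> `|\sum_(x <- s) F x| <= (count p s)%:R.
Proof.
elim: s => [|x s IH] le_F; first by rewrite big_nil normr0.
rewrite big_cons /= natrD (le_trans (ler_normD _ _)) // lerD ?le_F ?mem_head //.
by apply: IH => y y_s; rewrite le_F // inE y_s orbT.
Qed.

Local Close Scope ring_scope.

Lemma leq_sumn_mem (x : nat) s : x \in s -> x <= sumn s.
Proof. by elim: s => [|y s IH] //=; rewrite inE => /predU1P [->|/IH]; lia. Qed.

Theorem proposition3p1 (n : nat) (D : diagram) (i : 'I_n) :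
  vsl_diagram n D -> a_row D i <= vcross_other n D i.
Proof.
move=> vslD; apply/bigmax_leqP => j _; rewrite mxE bb_entry_a.
have le_total k : k < n -> npass n D k <= sumn [seq npass n D k' | k' <- iota 0 n].
  by move=> lt_k; apply/leq_sumn_mem/map_f; rewrite mem_iota.
rewrite (@asum_passages _ _ _ _ (path_bound n D) _ _ (path_bound n D) 0) ?addn0 //; last first.
  by move=> k lt_k; rewrite /path_bound mul2n -addnn leq_add ?le_total.
rewrite -lez_nat abszE -natz /index_iota subn0.
apply: norm_sum_le_count => u; rewrite mem_iota => /andP [_ lt_u].
exact/passage_contrib_bound/vsl_partner.
Qed.
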